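(* Let $\{A_1,\ldots,A_q\}$ be a collection of sets, each of size at least one, such that all but at most one of them have size exactly $2$, and each element appears in at most two of the sets. Then $\{A_1,\ldots,A_q\}$ has a system of distinct representatives, i.e., there exist pairwise distinct elements $a_1,\ldots,a_q$ with $a_i\in A_i$ for all $i\in[q]$. *)

From mathcomp Require Import all_boot.
Set Implicit Arguments. Unset Strict Implicit. Unset Printing Implicit Defensive.

Definition has_SDR (T : finType) (q : nat) (A : 'I_q -> {set T}) : Prop :=
  exists a : 'I_q -> T, injective a /\ forall i, a i \in A i.

From mathcomp Require Import all_boot.

Set Implicit Arguments.
Unset Strict Implicit.
Unset Printing Implicit Defensive.

(* Choose an element x of the exceptional
   set A_i0 (of any set if all have size 2) and represent A_i0 by x.  Deleting
   x from the other sets keeps every set nonempty, since they all have size 2;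
   and as x lies in at most one of them, at most one set drops to size 1.
   The remaining family thus satisfies the hypotheses again, and an SDR of it
   avoids x. *)

Lemma card_preim_lift n (i0 : 'I_n.+1) (P : pred 'I_n.+1) :
  #|[set k | P (lift i0 k)]| = #|[set i | P i] :\ i0|.
Proof.
rewrite -(card_imset _ (@lift_inj _ i0)); apply: eq_card => i.
rewrite !inE; case: (unliftP i0 i) => [k ->|->].
  by rewrite eq_sym neq_lift mem_imset ?inE //; apply: lift_inj.
by rewrite eqxx; apply/imsetP => -[k _ /eqP]; apply/negP/neq_lift.
Qed.

Section SDRs.

Variable T : finType.

Lemma has_SDR_ord0 (A : 'I_0 -> {set T}) : has_SDR A.
Proof. by exists (fun i : 'I_0 => match notF (ltn_ord i) with end); split => -[]. Qed.

Lemma has_SDR_lift q (A : 'I_q.+1 -> {set T}) i0 x :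
  x \in A i0 -> has_SDR (fun k => A (lift i0 k) :\ x) -> has_SDR A.
Proof.
move=> xA [a [a_inj aA]].
have a_neq_x k : (a k == x) = false by apply/negbTE; case/setD1P: (aA k).
exists (fun i => if unlift i0 i is Some k then a k else x); split => [i j|i].
  case: (unliftP i0 i) => [k ->|->]; case: (unliftP i0 j) => [l ->|->] //.
  - by move/a_inj ->.
  - by move/eqP; rewrite a_neq_x.
  - by move/esym/eqP; rewrite a_neq_x.
case: (unliftP i0 i) => [k ->|->] //.
by case/setD1P: (aA k).
Qed.

Lemma exists_exceptional_index q (A : 'I_q.+1 -> {set T}) :
    (forall i j, i != j -> #|A i| != 2 -> #|A j| = 2) ->
  exists i0, forall j, j != i0 -> #|A j| = 2.
Proof.
move=> pairsA; case: (pickP (fun i => #|A i| != 2)) => [i0 i0_ne2|all2].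
  by exists i0 => j j_neq_i0; apply: pairsA i0_ne2; rewrite eq_sym.
by exists ord0 => j _; apply/eqP/negbFE/all2.
Qed.

Section Removal.

Variables (q : nat) (A : 'I_q.+1 -> {set T}) (i0 : 'I_q.+1) (x : T).
Hypotheses (xA : x \in A i0) (pairs_off_i0 : forall j, j != i0 -> #|A j| = 2).
Hypothesis degA : forall y, #|[set i | y \in A i]| <= 2.

Lemma card_removed k : #|A (lift i0 k) :\ x| = (x \notin A (lift i0 k)).+1.
Proof.
have := @pairs_off_i0 (lift i0 k); rewrite eq_sym neq_lift (cardsD1 x) => /(_ isT).
by case: (x \in _) => [[]|].
Qed.

Lemma removed_degree_le2 y : #|[set k | y \in A (lift i0 k) :\ x]| <= 2.
Proof.
rewrite (card_preim_lift i0 (fun i => y \in A i :\ x)) (leq_trans _ (degA y)) //.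
apply: (leq_trans (subset_leq_card (subD1set _ i0))); apply: subset_leq_card.
by apply/subsetP => i; rewrite !inE => /andP[].
Qed.

Lemma x_in_at_most_one_other : #|[set k | x \in A (lift i0 k)]| <= 1.
Proof.
rewrite (card_preim_lift i0 (fun i => x \in A i)) -ltnS.
by have := degA x; rewrite (cardsD1 i0) inE xA.
Qed.

Lemma removed_pairs_but_one k l : k != l ->
  #|A (lift i0 k) :\ x| != 2 -> #|A (lift i0 l) :\ x| = 2.
Proof.
rewrite !card_removed => k_neq_l; case: (boolP (x \in A (lift i0 k))) => // xk _.
suff -> : x \in A (lift i0 l) = false by [].
apply/negbTE; apply: contra k_neq_l => xl.
by apply/eqP/(card_le1_eqP x_in_at_most_one_other); rewrite inE.
Qed.

End Removal.

End SDRs.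

Theorem lemma42 (T : finType) (q : nat) (A : 'I_q -> {set T}) :
  (forall i, 0 < #|A i|) ->
  (forall i j, i != j -> #|A i| != 2 -> #|A j| = 2) ->
  (forall x : T, #|[set i | x \in A i]| <= 2) ->
  has_SDR A.
Proof.
elim: q A => [|q IH] A A_gt0 pairsA degA; first exact: has_SDR_ord0.
have [i0 pairs_off_i0] := exists_exceptional_index pairsA.
have /set0Pn [x xA] : A i0 != set0 by rewrite -card_gt0.
apply: (has_SDR_lift xA); apply: IH => [k|k l|y].
- by rewrite card_removed.
- exact: removed_pairs_but_one.
- exact: removed_degree_le2.
Qed.
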